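(* Let $f:\mathcal D\subset\Omega\times(0,\infty)\to\Omega\times(0,\infty)$ be a measure-preserving embedding and suppose there exist $W\in\mathcal C^1_\psi(\Omega\times(0,\infty))$, constants $\beta,\delta>0$ and a decreasing bounded function $k:(0,\infty)\to\mathbb R$ with $\lim_{r\to\infty}k(r)=0$ such that $\beta\le\partial_rW\le\delta$ on $\Omega\times(0,\infty)$ and $W(f(\omega,r))\le W(\omega,r)+k(r)$ on $\mathcal D$. Then there is a measurable set $\mathcal Z\subset\mathcal U$ with $(\mu_\Omega\otimes\lambda)(\mathcal Z)=0$ such that $\liminf_{n\to\infty}r_n<\infty$ for every $(\omega_0,r_0)\in\mathcal U\setminus\mathcal Z$. In particular the set $\mathcal E=\{(\omega_0,r_0)\in\mathcal D_\infty:\lim_{n\to\infty}r_n=\infty\}$ satisfies $\mathcal E\subset\mathcal Z$ and has $\mu_\Omega\otimes\lambda$-measure zero.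
   Context: $\Omega$ is a commutative (written additively), compact, metrizable topological group, and $\psi:\mathbb R\to\Omega$ is a continuous group homomorphism with $\psi(\mathbb R)$ dense. $\mu_\Omega$ is the Haar probability measure of $\Omega$ and $\lambda$ Lebesgue measure on $\mathbb R$. For $U:\Omega\to\mathbb R$, $\partial_\psi U(\omega)=\lim_{t\to0}\frac{U(\omega+\psi(t))-U(\omega)}{t}$; $\mathcal C^1_\psi(\Omega)$ is the space of continuous $U$ with $\partial_\psi U$ existing everywhere and continuous; $\mathcal C^1_\psi(\Omega\times(0,\infty))$ is the set of $W(\omega,r)$ with $W(\cdot,r)\in\mathcal C^1_\psi(\Omega)$ for all $r$ and $W(\omega,\cdot)\in\mathcal C^1(0,\infty)$ for all $\omega$. A measure-preserving embedding is a continuous injective map $f:\mathcal D\to\Omega\times(0,\infty)$, $\mathcal D\subset\Omega\times(0,\infty)$ open, with $(\mu_\Omega\otimes\lambda)(f(\mathcal B))=(\mu_\Omega\otimes\lambda)(\mathcal B)$ for Borel $\mathcal B\subset\mathcal D$. Set $\mathcal D_1=\mathcal D$, $\mathcal D_{n+1}=f^{-1}(\mathcal D_n)$, $\mathcal D_\infty=\bigcap_n\mathcal D_n$; for $(\omega_0,r_0)\in\mathcal D_\infty$ write $(\omega_n,r_n)=f^n(\omega_0,r_0)$, and $\mathcal U=\{(\omega_0,r_0)\in\mathcal D_\infty:\limsup_{n\to\infty}r_n=\infty\}$. *)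

From HB Require Import structures.
From mathcomp Require Import all_boot all_order all_algebra.
From mathcomp Require Import all_classical all_reals all_analysis.
Set Implicit Arguments. Unset Strict Implicit. Unset Printing Implicit Defensive.
Import Order.TTheory GRing.Theory Num.Theory.
Import numFieldNormedType.Exports.
Local Open Scope classical_set_scope.
Local Open Scope ring_scope.

(* A zmodType is inhabited (by 0); the alias [ptd] records this as a pointed
   type, which the library's generated-sigma-algebra construction requires. *)
Definition ptd (Om : topologicalZmodType) : Type := Om.
HB.instance Definition _ (Om : topologicalZmodType) := TopologicalZmodule.on (ptd Om).
HB.instance Definition _ (Om : topologicalZmodType) := isPointed.Build (ptd Om) 0.
Notation Borel Om := (g_sigma_algebraType (@open (ptd Om))).
Notation OmR Om R := (Borel Om * measurableTypeR R)%type.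

Definition metrizable (R : realType) (T : topologicalType) : Prop :=
  exists d : T -> T -> R,
    (forall x y, d x y = 0 <-> x = y) /\
    (forall x y, d x y = d y x) /\
    (forall x y z, d x z <= d x y + d y z) /\
    (forall x, nbhs x = filter_from [set e : R | 0 < e] (fun e => [set y | d x y < e])).

(* Haar probability measure of a compact abelian group: a translation invariant
   Borel probability measure (unique for compact metrizable groups). *)
Definition haar_probability (R : realType) (Om : topologicalZmodType)
  (mu : probability (Borel Om) R) : Prop :=
  forall (a : Om) (A : set (Borel Om)), measurable A ->
    mu [set x : Borel Om | A ((x : Om) + a)] = mu A.

Section Dpsi.
Variables (R : realType) (Om : topologicalZmodType) (psi : R -> Om).

Definition dq_psi (U : Om -> R) (w : Om) : R -> R :=
  fun t => (U (w + psi t) - U w) / t.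

Definition dpsi (U : Om -> R) (w : Om) : R := lim (dq_psi U w @ dnbhs 0).

Definition C1_psi (U : Om -> R) : Prop :=
  continuous U /\ (forall w, cvg (dq_psi U w @ dnbhs 0)) /\ continuous (dpsi U).

Definition C1_psi_half (W : Om -> R -> R) : Prop :=
  (forall r, 0 < r -> C1_psi (fun w => W w r)) /\
  (forall w, (forall r, 0 < r -> derivable (W w) r 1) /\
             (forall r, 0 < r -> {for r, continuous (derive1 (W w))})).
End Dpsi.

Section Iterates.
Variables (T : Type) (f : T -> T) (D : set T).
(* Dn n = D_{n+1}:  D_1 = D, D_{n+1} = D /\ f^{-1}(D_n) *)
Fixpoint Dn (n : nat) : set T :=
  match n with
  | 0 => D
  | n.+1 => D `&` f @^-1` (Dn n)
  end.
Definition Dinf : set T := \bigcap_n Dn n.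
End Iterates.

Definition rseq (Om : Type) (R : Type) (f : Om * R -> Om * R) (x : Om * R) : nat -> R :=
  fun n => (iter n f x).2.

From HB Require Import structures.
From mathcomp Require Import all_boot all_order all_algebra.
From mathcomp Require Import all_classical all_reals all_analysis.
From mathcomp Require Import measurable_realfun.
From mathcomp Require Import ring lra.
Import Order.TTheory GRing.Theory Num.Theory.
Import numFieldNormedType.Exports.
Local Open Scope classical_set_scope.
Local Open Scope ring_scope.

(* Write g(x) := W(omega, r) for x = (omega, r).  Since dW/dr >= beta, g tends
   to infinity along an orbit with r_n --> oo, so such an orbit has a last
   visit below each level a; let T_a ([last_crossing a]) be the set of these
   last visits, i.e. the points x of escaping orbits with g(x) < a <= g(f^n x)
   for all n >= 1.  The escaping set is covered by the preimages f^-n(T_j), so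
   it suffices that every T_a is null.
   For a <= a', moving each point of T_a to its last visit below a' sends
   countably many pieces of T_a measure-preservingly and disjointly (f is
   injective) into T_a', so the measure of T_a is nondecreasing in a.  For large
   a the points of T_a have large r, hence a - k(r) <= g < a with k(r) small, so
   every omega-section of T_a is a short interval and T_a has small measure.
   Being nondecreasing and arbitrarily small, the measure of T_a vanishes. *)

Lemma cvgry_natP (R : realType) (u : R^nat) :
  u @ \oo --> +oo <-> forall M : nat, exists N, forall j, M%:R < u (j + N)%N.
Proof.
split=> [/cvgryPgt uy M|uy].
  by have [N _ HN] := uy M%:R; exists N => j; apply: HN; rewrite /= leq_addl.
apply/cvgryPgt => A; have [N HN] := uy (Num.truncn A).+1.
exists N => // n /= Nn; rewrite (lt_trans (truncnS_gt A)) //.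
by have := HN (n - N)%N; rewrite subnK.
Qed.

Lemma limn_einf_pinfty_cvgry (R : realType) (u : R^nat) :
  limn_einf (fun n => (u n)%:E) = +oo%E -> u @ \oo --> +oo.
Proof.
move=> uy; apply/cvgeryP.
have : einfs (fun n => (u n)%:E) @ \oo --> +oo%E.
  by rewrite -uy limn_einf_lim; exact: is_cvg_einfs.
move=> /cvgeyPge einfy; apply/cvgeyPge => A; have [N _ HN] := einfy A.
exists N => // n Nn; apply: le_trans (HN n Nn) _.
by apply: ereal_inf_lbound; exists n => /=.
Qed.

Lemma measurable_fun_pair_in d d1 d2 (T : measurableType d)
    (T1 : measurableType d1) (T2 : measurableType d2) (D : set T) (h : T -> T1 * T2) :
  measurable D -> measurable_fun D (fst \o h) -> measurable_fun D (snd \o h) ->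
  measurable_fun D h.
Proof.
move=> mD m1 m2 _ Y mY.
have sigmaD : sigma_algebra setT [set Y : set (T1 * T2) | measurable (D `&` h @^-1` Y)].
  split => [|A mA|F mF] /=.
  - by rewrite preimage_set0 setI0.
  - rewrite setTD preimage_setC -setDE.
    have -> : D `\` h @^-1` A = D `\` (D `&` h @^-1` A).
      apply/seteqP; split => x /= [Dx nA]; split => //; first by case.
      by move=> hA; apply: nA.
    exact: measurableD mD mA.
  - by rewrite preimage_bigcup setI_bigcupr; exact: bigcupT_measurable mF.
apply: (smallest_sub sigmaD _ mY).
move=> A [] [B mB <-] /=; rewrite setTI -comp_preimage; [exact: m1 | exact: m2].
Qed.

Lemma open_setI_preimage (T U : topologicalType) (D : set T) (h : T -> U) (A : set U) :
  open D -> {in D, continuous h} -> open A -> open (D `&` h @^-1` A).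
Proof.
move=> oD hc oA; rewrite openE => x [Dx Ahx].
apply: filterI; first exact: open_nbhs_nbhs.
by apply: (hc x (mem_set Dx)); apply: open_nbhs_nbhs.
Qed.

Section compact_metrizable_product.
Context {R : realType} {Om : topologicalZmodType}.
Hypotheses (Om_compact : compact [set: Om]) (Om_metrizable : metrizable R Om).

(* Compactness gives, for every radius 1/(n+1), a finite family of balls
   covering Om; this countability is what makes every open
   subset of Om x R a countable union of measurable boxes. *)
Lemma open_measurable_OmR (O : set (Om * R)) : open O -> measurable (O : set (OmR Om R)).
Proof.
case: Om_metrizable => d [d0 [dsym [dtri dnbhs]]] oO.
have open_ball c r : open [set y | d c y < r].
  rewrite openE => y /= dy; rewrite /interior /= dnbhs.
  exists (r - d c y) => /=; first by rewrite subr_gt0.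
  by move=> z /= dz; rewrite (le_lt_trans (dtri c y z)) // -ltrBrDl.
have ball_cover n : exists s : nat -> Om, forall w, exists i, d (s i) w < n.+1%:R^-1.
  have : cover_compact [set: ptd Om] by rewrite -(compact_cover (ptd Om)).
  move=> /(_ Om setT (fun c => [set y | d c y < n.+1%:R^-1])) [] //.
    by move=> w _; exists w => //=; rewrite (proj2 (d0 w w)) // invr_gt0 ltr0n.
  move=> F _ HF; exists (fun i => nth 0 (finmap.enum_fset F) i) => w.
  have [c /= cF cw] := HF w I.
  by exists (index c (finmap.enum_fset F)); rewrite nth_index.
have [s hs] := choice ball_cover.
pose box n c := [set w | d c w < n.+1%:R^-1] `*`
  [set y : R | forall w, d c w < n.+1%:R^-1 -> O (w, y)]°.
have -> : O = \bigcup_n \bigcup_i box n (s n i).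
  apply/seteqP; split=> [[w y] Ow|[w y] [n _ [i _ [/= Hw Hy]]]]; last first.
    exact: (nbhs_singleton Hy w Hw).
  move: oO; rewrite openE => /(_ _ Ow) [[U V] /= [+ nV] UV].
  rewrite dnbhs => -[e /= e0 Ue].
  have [n hn] : exists n : nat, n.+1%:R^-1 < e / 2.
    exists (Num.truncn (2 / e)).
    by rewrite invf_plt ?posrE ?ltr0n ?divr_gt0 // invf_div truncnS_gt.
  have [i hi] := hs n w; exists n => //; exists i => //; split => //=.
  apply: filterS nV => y' Vy' w' hw'; apply: (UV (w', y')); split => //=.
  apply: Ue => /=; rewrite (le_lt_trans (dtri w (s n i) w')) // dsym.
  by rewrite [e]splitr ltrD // (lt_trans _ hn).
apply: bigcupT_measurable => n; apply: bigcupT_measurable => i.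
apply: measurableX; first by apply: sub_sigma_algebra; apply: open_ball.
by apply: open_measurable; apply: open_interior.
Qed.

Lemma open_continuous_measurable_fun_Om (D : set (Om * R)) (h : Om * R -> Om) :
  open D -> {in D, continuous h} ->
  measurable_fun (D : set (OmR Om R)) (h : OmR Om R -> Borel Om).
Proof.
move=> oD hc; apply: (@measurability _ _ (OmR Om R) (Borel Om) D h (@open (ptd Om))) => //.
by move=> _ [A oA <-]; apply: open_measurable_OmR; apply: open_setI_preimage.
Qed.

Lemma open_continuous_measurable_fun_R (D : set (Om * R)) (h : Om * R -> R) :
  open D -> {in D, continuous h} ->
  measurable_fun (D : set (OmR Om R)) (h : OmR Om R -> measurableTypeR R).
Proof.
move=> oD hc.
apply: (@measurability _ _ (OmR Om R) (measurableTypeR R) D h (@RGenOpens.G R)).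
  by rewrite RGenOpens.measurableE.
move=> _ [A [x [y ->]] <-]; apply: open_measurable_OmR.
by apply: open_setI_preimage => //; exact: itv_open.
Qed.

Lemma open_continuous_measurable_fun (D : set (Om * R)) (h : Om * R -> Om * R) :
  open D -> {in D, continuous h} ->
  measurable_fun (D : set (OmR Om R)) (h : OmR Om R -> OmR Om R).
Proof.
move=> oD hc; apply: measurable_fun_pair_in; first exact: open_measurable_OmR.
- apply: open_continuous_measurable_fun_Om => // x xD.
  by apply: continuous_comp; [exact: hc | exact: cvg_fst].
- apply: open_continuous_measurable_fun_R => // x xD.
  by apply: continuous_comp; [exact: hc | exact: cvg_snd].
Qed.

End compact_metrizable_product.

Section radial_growth.
Context {R : realType} {Om : topologicalZmodType} {psi : R -> Om}.
Context {W : Om -> R -> R} {beta delta : R}.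
Hypotheses (W_C1 : C1_psi_half psi W) (beta_pos : 0 < beta) (delta_pos : 0 < delta)
  (dW_bounds : forall w r, 0 < r -> beta <= derive1 (W w) r <= delta).

Lemma W_increment_bounds w {r s} : 0 < r -> r <= s ->
  beta * (s - r) <= W w s - W w r <= delta * (s - r).
Proof.
move=> r0; rewrite le_eqVlt => /orP[/eqP <-|rs]; first by rewrite !subrr !mulr0 lexx.
have der x : 0 < x -> derivable (W w) x 1 by move=> x0; exact: (W_C1.2 w).1 x x0.
have hd x : x \in `]r, s[ -> is_derive x 1 (W w) (derive1 (W w) x).
  rewrite in_itv /= => /andP[rx _].
  by rewrite derive1E; apply/derivableP/der/(lt_trans r0).
have hc : {within `[r, s], continuous (W w)}.
  apply: derivable_within_continuous => x; rewrite in_itv /= => /andP[rx _].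
  exact/der/(lt_le_trans r0).
have [c cin ->] := @MVT R (W w) (derive1 (W w)) r s rs hd hc.
have c0 : 0 < c by move: cin; rewrite in_itv /= => /andP[/(lt_trans r0)].
have /andP[h1 h2] := dW_bounds w c c0.
by rewrite ![_ * (s - r)]mulrC !ler_pM2l ?subr_gt0 // h1 h2.
Qed.

Lemma W_lipschitz w {a b} : 0 < a -> 0 < b -> `|W w a - W w b| <= delta * `|a - b|.
Proof.
wlog ab : a b / a <= b => [hwlog a0 b0|a0 b0].
  by have [/hwlog->//|/ltW/hwlog] := leP a b; rewrite distrC (distrC a); apply.
have /andP[lo hi] := W_increment_bounds w a0 ab.
have incr0 : 0 <= W w b - W w a.
  by apply: le_trans lo; rewrite mulr_ge0 ?subr_ge0 ?(ltW beta_pos).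
by rewrite distrC ger0_norm // distrC ger0_norm ?subr_ge0.
Qed.

Lemma W_at1_bounded : compact [set: Om] -> exists C, forall w, `|W w 1| <= C.
Proof.
move=> Om_compact.
have cW : continuous (fun w => W w 1) := (W_C1.1 1 ltr01).1.
have : compact ((fun w => W w 1) @` [set: Om]).
  by apply: continuous_compact => //; exact: continuous_subspaceT.
move=> /compact_bounded [M [_ HM]].
by exists (M + 1) => w; apply: (HM (M + 1)); [rewrite ltrDl | exists w].
Qed.

Lemma W_ge_of_r_large w r C c : `|W w 1| <= C -> 1 <= r -> (c + C) / beta <= r - 1 ->
  c <= W w r.
Proof.
move=> /ler_normlP[CW _] r1; rewrite ler_pdivrMr // => rc.
have /andP[+ _] := W_increment_bounds w ltr01 r1; lra.
Qed.

Lemma r_gt_of_W_large w r rho C : `|W w 1| <= C -> 0 < r -> 1 <= rho ->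
  C + delta * (rho - 1) < W w r -> rho < r.
Proof.
move=> /ler_normlP[_ WC] r0 rho1; apply: contraTT; rewrite -!leNgt => rrho.
have /andP[+ _] := W_increment_bounds w r0 rrho.
have /andP[_ +] := W_increment_bounds w ltr01 rho1.
have : 0 <= beta * (rho - r) by rewrite mulr_ge0 ?subr_ge0 // ltW.
lra.
Qed.

Lemma W_continuous (x : Om * R) : 0 < x.2 ->
  {for x, continuous (fun y : Om * R => W y.1 y.2)}.
Proof.
move=> x0; apply/cvgrPdist_lt => e e0.
have e20 : 0 < e / 2 by rewrite divr_gt0.
have nW : \forall w \near x.1, `|W x.1 x.2 - W w x.2| < e / 2.
  by move/cvgrPdist_lt : ((W_C1.1 x.2 x0).1 x.1) => /(_ _ e20).
pose eps := Num.min x.2 (e / 2 / delta).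
have eps0 : 0 < eps by rewrite lt_min x0 divr_gt0.
exists ([set w | `|W x.1 x.2 - W w x.2| < e / 2], ball x.2 eps) => /=.
  by split => //; exact: nbhsx_ballx.
move=> [w r] [/= hw]; rewrite /ball /= lt_min => /andP[h1 h2].
have r0 : 0 < r by move: h1; rewrite ltr_norml => /andP[_]; rewrite ltrBlDl ltrDr.
rewrite [e]splitr (le_lt_trans (ler_distD (W w x.2) _ _)) // ltrD //.
by rewrite (le_lt_trans (W_lipschitz w x0 r0)) // -ltr_pdivlMl // mulrC.
Qed.

Lemma lebesgue_measure_level_band (S : set R) w (lo hi : R) : lo <= hi -> measurable S ->
  (forall r, S r -> 0 < r /\ lo <= W w r < hi) ->
  (lebesgue_measure S <= (((hi - lo) / beta) *+ 2)%:E)%E.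
Proof.
move=> lohi mS HS.
have [[r0 Sr0]|nS] := pselect (exists r, S r); last first.
  have -> : S = set0 by apply/seteqP; split => // r Sr; apply: nS; exists r.
  by rewrite measure0 lee_fin mulrn_wge0 // divr_ge0 ?subr_ge0 // ltW.
have close p q : S p -> S q -> p <= q -> q - p < (hi - lo) / beta.
  move=> /HS[p0 /andP[lp _]] /HS[_ /andP[_ uq]] pq.
  have /andP[h _] := W_increment_bounds w p0 pq.
  rewrite -(ltr_pM2l beta_pos) mulrCA divff ?mulr1 ?gt_eqF //; lra.
rewrite -(lebesgue_measure_ball r0) ?divr_ge0 ?subr_ge0 ?(ltW beta_pos) //.
apply: le_measure; rewrite ?inE //; first exact: measurable_ball.
move=> r Sr; rewrite /ball /=; have [rr0|r0r] := leP r r0.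
  by rewrite ger0_norm ?subr_ge0 //; apply: close.
by rewrite ltr0_norm ?subr_lt0 // opprB; apply: close => //; exact: ltW.
Qed.

End radial_growth.

Section orbits.
Context {T : Type} {f : T -> T} {D : set T}.

Lemma Dinf_sub {x} : Dinf f D x -> D x.
Proof. by move=> /(_ 0%N I). Qed.

Lemma Dinf_f {x} : Dinf f D x -> Dinf f D (f x).
Proof. by move=> Dx n _; have [] := Dx n.+1 I. Qed.

Lemma Dinf_iter n {x} : Dinf f D x -> Dinf f D (iter n f x).
Proof. by elim: n => //= n IH /IH /Dinf_f. Qed.

Lemma Dinf_iter_inj n : set_inj D f -> set_inj (Dinf f D) (iter n f).
Proof.
move=> f_inj; elim: n => [|n IH] x y /set_mem Dx /set_mem Dy //.
rewrite !iterSr => /(IH _ _ (mem_set (Dinf_f Dx)) (mem_set (Dinf_f Dy))).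
by apply: f_inj; apply: mem_set; exact: Dinf_sub.
Qed.

End orbits.

Lemma rseq_iter (A B : Type) (f : A * B -> A * B) m x :
  rseq f (iter m f x) = [sequence rseq f x (n + m)%N]_n.
Proof. by apply/funext => n; rewrite /rseq /= iterD. Qed.

Section measure_preserving_orbits.
Context {d} {T : measurableType d} {R : realType} {P : {measure set T -> \bar R}}.
Context {D : set T} {f : T -> T}.
Hypotheses (mD : measurable D) (mf : measurable_fun D f)
  (f_mp : forall B, measurable B -> B `<=` D -> measurable (f @` B) /\ P (f @` B) = P B).

Lemma measurable_Dn n : measurable (Dn f D n).
Proof. by elim: n => [|n IH] //=; exact: mf. Qed.

Lemma measurable_Dinf : measurable (Dinf f D).
Proof. by apply: bigcapT_measurable => n; exact: measurable_Dn. Qed.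

Lemma measurable_fun_iter n : measurable_fun (Dinf f D) (iter n f).
Proof.
elim: n => [|n IH]; first exact: measurable_id.
have -> : iter n.+1 f = iter n f \o f by apply/funext => x; rewrite iterSr.
apply: (measurable_comp measurable_Dinf) => //; first by move=> _ [x Dx <-]; exact: Dinf_f.
by apply: (measurable_funS mD) => // x /Dinf_sub.
Qed.

Lemma iter_image_measure n B : measurable B -> B `<=` Dinf f D ->
  measurable (iter n f @` B) /\ P (iter n f @` B) = P B.
Proof.
elim: n B => [|n IH] B mB BD.
  by rewrite (_ : _ @` B = B) //; apply/seteqP; split => [x [y By <-]|x Bx] //; exists x.
have -> : iter n.+1 f @` B = iter n f @` (f @` B).
  apply/seteqP; split => [_ [x Bx <-]|_ [_ [x Bx <-] <-]].
    by exists (f x); [exists x | rewrite iterSr].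
  by exists x => //; rewrite iterSr.
have [mfB <-] := f_mp B mB (fun x Bx => Dinf_sub (BD x Bx)).
by apply: IH => // _ [x Bx <-]; exact: Dinf_f (BD x Bx).
Qed.

Lemma measure_preimage_iter0 n B : measurable B -> P B = 0%E ->
  P (Dinf f D `&` iter n f @^-1` B) = 0%E.
Proof.
move=> mB PB0; pose S := Dinf f D `&` iter n f @^-1` B.
have mS : measurable S by exact: measurable_fun_iter measurable_Dinf _ mB.
have [mfS <-] := iter_image_measure n S mS (fun x => @proj1 _ _).
by apply/eqP; rewrite -measure_le0 -PB0 le_measure ?inE // => _ [x [_ Bx] <-].
Qed.

End measure_preserving_orbits.

Lemma product_measure1_le_sections d (T : measurableType d) (R : realType)
    (mu : probability T R) (A : set (T * R)) (e : R) : measurable A ->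
  (forall w, lebesgue_measure (xsection A w) <= e%:E)%E ->
  ((mu \x lebesgue_measure) A <= e%:E)%E.
Proof.
move=> mA secA.
have -> : (mu \x lebesgue_measure)%E A = (\int[mu]_x (lebesgue_measure \o xsection A) x)%E
  by [].
have msec : measurable_fun setT (lebesgue_measure \o xsection A).
  exact: measurable_fun_xsection.
apply: (le_trans (@ge0_le_integral _ _ _ mu setT measurableT _ (cst e%:E) _ msec _ _)).
- by move=> x _; exact: measure_ge0.
- exact: measurable_cst.
- by move=> x _; exact: secA.
- by rewrite integral_cst //= probability_setT mule1.
Qed.

Section escaping_orbits.
Context {R : realType} {Om : topologicalZmodType}.
Hypotheses (Om_compact : compact [set: Om]) (Om_metrizable : metrizable R Om).
Context {psi : R -> Om} {mu : probability (Borel Om) R}.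
Context {D : set (Om * R)} {f : Om * R -> Om * R}.
Hypotheses (D_open : open D) (D_pos : forall x, D x -> 0 < x.2)
  (f_cont : {in D, continuous f}) (f_inj : set_inj D f)
  (f_mp : forall B : set (OmR Om R), measurable B -> B `<=` D ->
      measurable (f @` B : set (OmR Om R)) /\
      (mu \x lebesgue_measure)%E (f @` B) = (mu \x lebesgue_measure)%E B).
Context {W : Om -> R -> R} {beta delta : R} {k : R -> R}.
Hypotheses (W_C1 : C1_psi_half psi W) (beta_pos : 0 < beta) (delta_pos : 0 < delta)
  (dW_bounds : forall w r, 0 < r -> beta <= derive1 (W w) r <= delta)
  (k_noninc : forall r s, 0 < r -> r <= s -> k s <= k r)
  (k_bounded : exists M : R, forall r, 0 < r -> `|k r| <= M)
  (k_lim : k x @[x --> +oo] --> 0)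
  (W_f : forall x, D x -> W (f x).1 (f x).2 <= W x.1 x.2 + k x.2).

Local Notation P := (mu \x lebesgue_measure)%E.
Local Notation Di := (Dinf f D).
Let g (x : Om * R) := W x.1 x.2.

Let mD : measurable (D : set (OmR Om R)) :=
  open_measurable_OmR Om_compact Om_metrizable _ D_open.
Let mf : measurable_fun (D : set (OmR Om R)) (f : OmR Om R -> OmR Om R) :=
  open_continuous_measurable_fun Om_compact Om_metrizable _ _ D_open f_cont.
Let mDi : measurable (Di : set (OmR Om R)) := measurable_Dinf mD mf.

Definition escaping := [set x : Om * R | Di x /\ rseq f x @ \oo --> +oo].

Definition last_crossing (a : R) :=
  [set x | escaping x /\ g x < a /\ forall n, a <= g (iter n.+1 f x)].

Lemma measurable_fun_g_iter n :
  measurable_fun (Di : set (OmR Om R)) ((g \o iter n f) : OmR Om R -> measurableTypeR R).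
Proof.
apply: (measurable_comp mD); last exact: measurable_fun_iter.
  by move=> _ [x Dx <-]; apply: Dinf_sub; exact: Dinf_iter.
apply: open_continuous_measurable_fun_R => // x /set_mem Dx.
exact (W_continuous W_C1 beta_pos delta_pos dW_bounds _ (D_pos _ Dx)).
Qed.

Lemma measurable_escaping : measurable (escaping : set (OmR Om R)).
Proof.
have mr n : measurable_fun (Di : set (OmR Om R)) (snd \o iter n f).
  exact: measurable_comp measurableT _ measurable_snd (measurable_fun_iter mD mf n).
have -> : escaping = Di `&` \bigcap_(M : nat) \bigcup_(N : nat) \bigcap_(j : nat)
    (Di `&` [set x | M%:R < (snd \o iter (j + N)%N f) x]).
  apply/seteqP; split=> x [Dx]; last first.
    move=> H; split => //; apply/cvgry_natP => M.
    by have [N _ HN] := H M I; exists N => j; exact: (HN j I).2.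
  move=> /cvgry_natP H; split => // M _; have [N HN] := H M.
  by exists N => // j _; split => //; exact: HN.
apply: measurableI => //; apply: bigcapT_measurable => M.
apply: bigcupT_measurable => N; apply: bigcapT_measurable => j.
by rewrite -preimage_itvoy; exact: mr.
Qed.

Lemma measurable_last_crossing a : measurable (last_crossing a : set (OmR Om R)).
Proof.
have -> : last_crossing a = escaping `&` (Di `&` [set x | (g \o iter 0 f) x < a]) `&`
    \bigcap_n (Di `&` [set x | a <= (g \o iter n.+1 f) x]).
  apply/seteqP; split=> x; last first.
    by move=> [[Ex [_ h1]] h2]; split => //; split => // n; exact: (h2 n I).2.
  move=> [Ex [h1 h2]]; split; first by split => //; split => //; exact: Ex.1.
  by move=> n _; split; [exact: Ex.1 | exact: h2 n].
apply: measurableI; first apply: measurableI.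
- exact: measurable_escaping.
- by rewrite -preimage_itvNyo; exact: measurable_fun_g_iter.
- apply: bigcapT_measurable => n.
  by rewrite -preimage_itvcy; exact: measurable_fun_g_iter.
Qed.

Lemma escaping_iter m x : escaping x -> escaping (iter m f x).
Proof.
by move=> [Dx cx]; split; [exact: Dinf_iter | rewrite rseq_iter cvg_shiftn].
Qed.

Lemma exists_last_crossing {x c} : escaping x -> (exists n, g (iter n f x) < c) ->
  exists m, last_crossing c (iter m f x).
Proof.
move=> Ex exc; have [C HC] := W_at1_bounded W_C1 Om_compact.
pose M := 1 + `|c + C| / beta.
have [N _ HN] := proj1 (cvgryPgt _) Ex.2 M.
have above n : (N <= n)%N -> c <= g (iter n f x).
  move=> /HN; rewrite /M => Mr.
  have : (c + C) / beta <= `|c + C| / beta by rewrite ler_pM2r ?invr_gt0 ?ler_norm.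
  have : 0 <= `|c + C| / beta by rewrite divr_ge0 // ltW.
  rewrite /rseq /= in Mr => ? ?.
  by apply: (W_ge_of_r_large W_C1 beta_pos dW_bounds _ _ _ _ (HC _)); lra.
have below_le n : g (iter n f x) < c -> (n <= N)%N.
  by apply: contraTT; rewrite -leNgt -ltnNge => /ltnW /above.
case: (@ex_maxnP (fun n => g (iter n f x) < c) N exc below_le) => m gm maxm.
exists m; split; [exact: escaping_iter | split => // n].
by rewrite -iterD leNgt; apply: contraTN isT => /maxm; rewrite addSn ltnNge leq_addl.
Qed.

(* Injectivity of f: two points of T_a on a common orbit would make one an
   iterate of the other, contradicting g < a at the first and g >= a after. *)
Lemma last_crossing_orbits_disjoint {a i j t t'} :
  last_crossing a t -> last_crossing a t' -> (i < j)%N -> iter i f t <> iter j f t'.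
Proof.
move=> Tt Tt' ij; rewrite -(subnKC (ltnW ij)) iterD => eq_it.
have t_eq :=
  Dinf_iter_inj i f_inj _ _ (mem_set Tt.1.1) (mem_set (Dinf_iter _ Tt'.1.1)) eq_it.
have := Tt'.2.2 (j - i).-1; rewrite prednK ?subn_gt0 // -t_eq.
by rewrite leNgt Tt.2.1.
Qed.

Lemma last_crossing_measure_le a a' : a <= a' ->
  (P (last_crossing a) <= P (last_crossing a'))%E.
Proof.
move=> aa'; pose S m := last_crossing a `&` (Di `&` iter m f @^-1` last_crossing a').
have mS m : measurable (S m : set (OmR Om R)).
  apply: measurableI; first exact: measurable_last_crossing.
  exact: measurable_fun_iter mD mf m mDi _ (measurable_last_crossing a').
have SDi m : S m `<=` Di by move=> x [[[]]].
have PS m := (iter_image_measure f_mp m (S m) (mS m) (SDi m)).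
have cover : last_crossing a `<=` \bigcup_m S m.
  move=> x Tx; have gx : exists n, g (iter n f x) < a'.
    by exists 0%N; exact: lt_le_trans Tx.2.1 aa'.
  have [m Tm] := exists_last_crossing Tx.1 gx.
  by exists m => //; split => //; split => //; exact: Tx.1.1.
have disj : trivIset setT (fun m => iter m f @` S m).
  move=> i j _ _ [y [[t St ti] [t' St' tj]]].
  case: (ltngtP i j) => // ij; exfalso.
    by apply: (last_crossing_orbits_disjoint St.1 St'.1 ij); rewrite ti tj.
  by apply: (last_crossing_orbits_disjoint St'.1 St.1 ij); rewrite ti tj.
have : (P (last_crossing a) <= \sum_(m <oo) P (S m))%E.
  by apply: (measure_sigma_subadditive P) => //; exact: measurable_last_crossing.
move=> /le_trans; apply.
rewrite (@eq_eseriesr _ (fun m => P (S m)) (fun m => P (iter m f @` S m))); last first.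
  by move=> m _; rewrite (PS m).2.
have mimg m : measurable (iter m f @` S m : set (OmR Om R)) := (PS m).1.
rewrite -measure_semi_bigcup //; last exact: bigcupT_measurable.
apply: le_measure; rewrite ?inE //; first exact: bigcupT_measurable.
  exact: measurable_last_crossing.
by move=> _ [m _ [t [_ [_ St]] <-]].
Qed.

Lemma last_crossing_level {a x} : last_crossing a x -> a - k x.2 <= g x < a.
Proof.
move=> [[Dx _] [gx ga]]; rewrite gx andbT lerBlDr.
exact: le_trans (ga 0%N) (W_f _ (Dinf_sub Dx)).
Qed.

Lemma last_crossing_measure_small e : 0 < e ->
  exists A0, forall a, A0 <= a -> (P (last_crossing a) <= e%:E)%E.
Proof.
move=> e0; have [C HC] := W_at1_bounded W_C1 Om_compact.
have [M HM] := k_bounded; pose eps := e * beta / 2.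
have eps0 : 0 < eps by rewrite divr_gt0 // mulr_gt0.
have [rho [rho1 k_rho]] : exists rho, 1 <= rho /\ k rho < eps.
  have [r1 [_ Hr1]] := proj1 (cvgrPdist_lt _ _) k_lim eps eps0.
  exists (`|r1| + 1); split; first by rewrite lerDr.
  have := Hr1 (`|r1| + 1); rewrite sub0r normrN => /(_ _)/(le_lt_trans (ler_norm _)).
  by apply; rewrite (le_lt_trans (ler_norm r1)) ?ltrDl.
exists (M + C + delta * (rho - 1) + 1) => a aA0.
apply: product_measure1_le_sections; first exact: measurable_last_crossing.
move=> w; have -> : e = ((a - (a - eps)) / beta) *+ 2.
  by rewrite /eps -mulr_natr; field; rewrite gt_eqF.
apply: (lebesgue_measure_level_band W_C1 beta_pos dW_bounds); first by rewrite gerBl ltW.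
  exact: measurable_xsection (measurable_last_crossing a).
move=> r; rewrite /xsection /= inE => Tr.
have r0 : 0 < r := D_pos _ (Dinf_sub Tr.1.1).
have /andP[lo hi] := last_crossing_level Tr; rewrite /g /= in lo hi.
have /ler_normlP[_ kM] := HM r r0.
have rho_r : rho < r.
  by apply: (r_gt_of_W_large W_C1 beta_pos dW_bounds _ _ _ _ (HC w) r0 rho1); lra.
have := k_noninc _ _ (lt_le_trans ltr01 rho1) (ltW rho_r).
by split => //; apply/andP; split; lra.
Qed.

Lemma last_crossing_measure0 a : P (last_crossing a) = 0%E.
Proof.
apply/eqP; rewrite eq_le measure_ge0 andbT; apply/lee_addgt0Pr => e e0.
rewrite add0e; have [A0 HA0] := last_crossing_measure_small e e0.
apply: (le_trans (last_crossing_measure_le a (Num.max a A0) _)).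
  by rewrite le_max lexx.
by apply: HA0; rewrite le_max lexx orbT.
Qed.

Lemma escaping_sub_last_crossings :
  escaping `<=`
    \bigcup_(j : nat) \bigcup_(n : nat) (Di `&` iter n f @^-1` last_crossing j%:R).
Proof.
move=> x Ex; pose j := (Num.truncn `|g x|).+1.
have gj : g x < j%:R by apply: le_lt_trans (ler_norm _) (truncnS_gt _).
have [m Tm] := exists_last_crossing Ex (ex_intro _ 0%N gj).
by exists j => //; exists m => //; split => //; exact: Ex.1.
Qed.

Lemma escaping_measure0 : P escaping = 0%E.
Proof.
apply/(negligibleP _ measurable_escaping).
apply: (@negligibleS _ _ _ P _ escaping escaping_sub_last_crossings).
apply: negligible_bigcup => j; apply: negligible_bigcup => n.
have mS : measurable (Di `&` iter n f @^-1` last_crossing j%:R : set (OmR Om R)).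
  exact: measurable_fun_iter mD mf n mDi _ (measurable_last_crossing _).
apply/(negligibleP _ mS); apply: (measure_preimage_iter0 mD mf f_mp n).
  exact: measurable_last_crossing.
exact: last_crossing_measure0.
Qed.

End escaping_orbits.

Theorem mainTheorem4
  (R : realType) (Om : topologicalZmodType)
  (Om_compact : compact [set: Om]) (Om_hausdorff : hausdorff_space Om)
  (Om_metrizable : metrizable R Om)
  (psi : R -> Om) (psi_cont : continuous psi)
  (psi_add : forall s t, psi (s + t) = psi s + psi t)
  (psi_dense : closure (range psi) = [set: Om])
  (mu : probability (Borel Om) R) (mu_haar : haar_probability mu)
  (D : set (Om * R)) (f : Om * R -> Om * R)
  (D_open : open D) (D_pos : forall x, D x -> 0 < x.2)
  (f_cont : {in D, continuous f}) (f_inj : set_inj D f)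
  (f_pos : forall x, D x -> 0 < (f x).2)
  (f_mp : forall B : set (OmR Om R), measurable B -> B `<=` D ->
      measurable (f @` B : set (OmR Om R)) /\
      (mu \x lebesgue_measure)%E (f @` B) = (mu \x lebesgue_measure)%E B)
  (W : Om -> R -> R) (beta delta : R) (k : R -> R)
  (W_C1 : C1_psi_half psi W) (beta_pos : 0 < beta) (delta_pos : 0 < delta)
  (dW_bounds : forall w r, 0 < r -> beta <= derive1 (W w) r <= delta)
  (k_noninc : forall r s, 0 < r -> r <= s -> k s <= k r)
  (k_bounded : exists M : R, forall r, 0 < r -> `|k r| <= M)
  (k_lim : k x @[x --> +oo] --> 0)
  (W_f : forall x, D x -> W (f x).1 (f x).2 <= W x.1 x.2 + k x.2) :
  let U := [set x | Dinf f D x /\ limn_esup (fun n => (rseq f x n)%:E) = +oo%E] in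
  let E := [set x | Dinf f D x /\ rseq f x @ \oo --> +oo] in
  exists Z : set (OmR Om R),
    [/\ measurable Z, Z `<=` U, (mu \x lebesgue_measure)%E Z = 0%E,
        (forall x, (U `\` Z) x -> (limn_einf (fun n => (rseq f x n)%:E) < +oo)%E) &
        E `<=` Z] /\
    measurable (E : set (OmR Om R)) /\ (mu \x lebesgue_measure)%E E = 0%E.
Proof.
move=> U E.
have mE : measurable (E : set (OmR Om R)) :=
  measurable_escaping Om_compact Om_metrizable D_open f_cont.
have E0 : (mu \x lebesgue_measure)%E E = 0%E :=
  escaping_measure0 Om_compact Om_metrizable D_open D_pos f_cont f_inj f_mp
    W_C1 beta_pos delta_pos dW_bounds k_noninc k_bounded k_lim W_f.
exists E; split=> //; split=> //.
- move=> x [Dx cx]; split => //.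
  by have [_ ->] := cvg_limn_einf_sup (proj2 (cvgeryP _) cx).
- move=> x [[Dx _] nE]; rewrite ltNge leye_eq; apply/negP => /eqP einfy.
  by apply: nE; split => //; exact: limn_einf_pinfty_cvgry.
Qed.
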